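(* Let $N\ge3$, $1<k<N-1$, $p>0$, $c>0$, and let $v:\mathbb R^{N-1}\to[0,\infty]$ be measurable with $0<v<\infty$ a.e. in $\mathbb R^{N-1}$ and $$v(x')\ge c\int_{\mathbb R^{N-1}}\frac{v(y')^p}{|x'-y'|^{k-1}}dy'\quad\text{for a.e. }x'\in\mathbb R^{N-1}.$$ Then there exists $C>0$ such that $v(x')\ge C|x'|^{1-k}$ for a.e. $x'\in\mathbb R^{N-1}$ with $|x'|>1$. *)

From HB Require Import structures.
From mathcomp Require Import all_boot all_order all_algebra.
From mathcomp Require Import all_classical all_reals all_analysis.
From mathcomp Require Import measurable_realfun.
Set Implicit Arguments. Unset Strict Implicit. Unset Printing Implicit Defensive.
Import Order.TTheory GRing.Theory Num.Theory.
Import numFieldNormedType.Exports.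
Local Open Scope classical_set_scope.
Local Open Scope ring_scope.

(* R^n is modelled as n.-tuple R, with the product (= Borel) sigma-algebra
   provided by mathcomp-analysis (measure_tuple_display). *)

Definition euclid_norm (R : realType) (n : nat) (x : n.-tuple R) : R :=
  Num.sqrt (\sum_(i < n) (tnth x i) ^+ 2).
Definition euclid_dist (R : realType) (n : nat) (x y : n.-tuple R) : R :=
  Num.sqrt (\sum_(i < n) (tnth x i - tnth y i) ^+ 2).

(* Lebesgue integral on R^n of a function with values in \bar R, as the
   iterated one-dimensional Lebesgue integral (by Tonelli this is the
   Lebesgue integral on R^n for nonnegative measurable functions). *)
Fixpoint lebint (R : realType) (n : nat) : (n.-tuple R -> \bar R) -> \bar R :=
  match n with
  | 0 => fun f => f [tuple]
  | n'.+1 => fun f =>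
      (\int[@lebesgue_measure R]_t lebint (fun x : n'.-tuple R => f (cons_tuple t x)))%E
  end.

Definition lebn (R : realType) (n : nat) (A : set (n.-tuple R)) : \bar R :=
  lebint (fun x => (\1_A x)%:E).

Definition ae_leb (R : realType) (n : nat) (P : n.-tuple R -> Prop) : Prop :=
  exists B : set (n.-tuple R),
    [/\ measurable B, [set x | ~ P x] `<=` B & lebn B = 0%E].

From HB Require Import structures.
From mathcomp Require Import all_boot all_order all_algebra.
From mathcomp Require Import all_classical all_reals all_analysis.
From mathcomp Require Import measurable_realfun.
From mathcomp Require Import ring lra.
Set Implicit Arguments. Unset Strict Implicit. Unset Printing Implicit Defensive.
Import Order.TTheory GRing.Theory Num.Theory.
Import numFieldNormedType.Exports.
Local Open Scope classical_set_scope.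
Local Open Scope ring_scope.

(* Let Q be the cube [0, 1/(2n)]^n in R^n, n = N - 1. Since v > 0 a.e. and Q
   has positive measure, I := \int_Q v^p is positive, possibly infinite. For
   |x| > 1 and y in Q we have |x - y| <= 2|x|, hence |x - y|^(1-k) >= (2|x|)^(1-k)
   as k >= 1, and the integral inequality gives v(x) >= c 2^(1-k) r |x|^(1-k)
   for a.e. such x, for any real 0 < r <= I. *)

Section lebint.
Variable R : realType.
Local Open Scope ereal_scope.

(* Unlike [ge0_le_integral], no measurability is required. *)
Lemma ge0_le_integralT d (T : measurableType d) (mu : {measure set T -> \bar R})
    (f g : T -> \bar R) :
  (forall x, 0 <= f x) -> (forall x, f x <= g x) ->
  \int[mu]_x f x <= \int[mu]_x g x.
Proof.
move=> f0 fg; have g0 x : 0 <= g x by exact: le_trans (f0 x) (fg x).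
rewrite !ge0_integralTE //.
apply: ge_ereal_sup => _ [h /= hf <-]; apply: ereal_sup_ubound; exists h => //= x.
exact: le_trans (hf x) (fg x).
Qed.

Lemma lebint_ge0 n (f : n.-tuple R -> \bar R) :
  (forall x, 0 <= f x) -> 0 <= lebint f.
Proof.
elim: n f => [|n IH] f f0 /=; first exact: f0.
by apply: integral_ge0 => t _; apply: IH.
Qed.

Lemma ge0_le_lebint n (f g : n.-tuple R -> \bar R) :
  (forall x, 0 <= f x) -> (forall x, f x <= g x) -> lebint f <= lebint g.
Proof.
elim: n f g => [|n IH] f g f0 fg /=; first exact: fg.
apply: ge0_le_integralT => t; first by apply: lebint_ge0.
exact: IH.
Qed.

Lemma measurable_fun_cons_section n (f : n.+1.-tuple R -> \bar R) (t : R) :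
  measurable_fun setT f -> measurable_fun setT (fun y => f (cons_tuple t y)).
Proof. by move=> mf; apply: measurableT_comp mf _; exact: measurable_cons. Qed.

Lemma measurable_fun_lebint n d (X : measurableType d)
    (f : X -> n.-tuple R -> \bar R) :
  (forall x y, 0 <= f x y) ->
  measurable_fun setT (fun z : X * n.-tuple R => f z.1 z.2) ->
  measurable_fun setT (fun x => lebint (f x)).
Proof.
elim: n d X f => [|n IH] d X f f0 mf /=.
  change (measurable_fun setT
    ((fun z : X * 0.-tuple R => f z.1 z.2) \o (fun x => (x, [tuple])))).
  by apply: measurableT_comp mf _; exact: measurable_fun_pair.
pose g (z : X * R) := lebint (fun y => f z.1 (cons_tuple z.2 y)).
have mg : measurable_fun setT g.
  apply: IH => [z y|]; first exact: f0.
  change (measurable_fun setT ((fun z : X * n.+1.-tuple R => f z.1 z.2) \o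
    (fun z : (X * R) * n.-tuple R => (z.1.1, cons_tuple z.1.2 z.2)))).
  apply: measurableT_comp mf _; apply: measurable_fun_pair.
    exact: measurableT_comp measurable_fst measurable_fst.
  apply: measurable_cons => //.
  exact: measurableT_comp measurable_snd measurable_fst.
exact: (@measurable_fun_fubini_tonelli_F _ _ X _ R lebesgue_measure g mg
  (fun z => lebint_ge0 (fun y => f0 z.1 _))).
Qed.

Lemma measurable_fun_lebint_cons n (f : n.+1.-tuple R -> \bar R) :
  (forall x, 0 <= f x) -> measurable_fun setT f ->
  measurable_fun setT (fun t => lebint (fun y => f (cons_tuple t y))).
Proof.
move=> f0 mf; apply: (@measurable_fun_lebint n _ _ (fun t y => f (cons_tuple t y))).
  by move=> *; exact: f0.
by apply: measurableT_comp mf _; exact: measurable_cons.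
Qed.

Lemma ge0_lebintD n (f g : n.-tuple R -> \bar R) :
  (forall x, 0 <= f x) -> (forall x, 0 <= g x) ->
  measurable_fun setT f -> measurable_fun setT g ->
  lebint (fun x => f x + g x) = lebint f + lebint g.
Proof.
elim: n f g => [|n IH] f g f0 g0 mf mg //=.
rewrite -ge0_integralD //; last first.
- exact: measurable_fun_lebint_cons.
- by move=> t _; apply: lebint_ge0.
- exact: measurable_fun_lebint_cons.
- by move=> t _; apply: lebint_ge0.
by apply: eq_integral => t _; apply: IH => //; exact: measurable_fun_cons_section.
Qed.

Lemma ge0_lebintZl n (a : R) (f : n.-tuple R -> \bar R) : (0 <= a)%R ->
  (forall x, 0 <= f x) -> measurable_fun setT f ->
  lebint (fun x => a%:E * f x) = a%:E * lebint f.
Proof.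
elim: n f => [|n IH] f a0 f0 mf //=.
rewrite -ge0_integralZl_EFin //; last first.
- exact: measurable_fun_lebint_cons.
- by move=> t _; apply: lebint_ge0.
by apply: eq_integral => t _; apply: IH => //; exact: measurable_fun_cons_section.
Qed.

Lemma measurable_fun_gt0 n (f : n.-tuple R -> \bar R) :
  measurable_fun setT f -> measurable [set x | 0 < f x].
Proof.
move=> mf; rewrite -[X in measurable X]setTI.
by apply: (measurable_lte measurableT _ mf); exact: measurable_cst.
Qed.

Lemma ge0_lebint_eq0 n (f : n.-tuple R -> \bar R) :
  (forall x, 0 <= f x) -> measurable_fun setT f ->
  lebint f = 0 -> lebn [set x | 0 < f x] = 0.
Proof.
rewrite /lebn; elim: n f => [|n IH] f f0 mf /=.
  by move=> f_eq0; rewrite indicE memNset //= f_eq0 ltxx.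
move=> int_eq0.
have sections_eq0 : ae_eq lebesgue_measure setT
    (fun t => lebint (fun y => f (cons_tuple t y))) (cst 0).
  apply/ae_eq_integral_abs => //; first exact: measurable_fun_lebint_cons.
  rewrite -int_eq0; apply: eq_integral => t _.
  by rewrite gee0_abs //; exact: lebint_ge0.
transitivity (\int[@lebesgue_measure R]_t (cst 0 t)); last exact: integral0.
apply: ae_eq_integral => //.
- apply: (@measurable_fun_lebint_cons n (fun y => (\1_[set z | (0 < f z)%E] y : R)%:E)).
    by move=> y; rewrite lee_fin.
  by apply/measurable_EFinP/measurable_indic; exact: measurable_fun_gt0.
- apply: filterS sections_eq0 => t section_eq0 _.
  by apply: IH => //; [exact: measurable_fun_cons_section|exact: section_eq0].
Qed.

Lemma le_lebn_setU n (A B C : set (n.-tuple R)) :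
  measurable A -> measurable B -> measurable C ->
  A `<=` B `|` C -> lebn A <= lebn B + lebn C.
Proof.
move=> mA mB mC ABC; rewrite /lebn -ge0_lebintD; last first.
- exact/measurable_EFinP/measurable_indic.
- exact/measurable_EFinP/measurable_indic.
- by move=> x; rewrite lee_fin.
- by move=> x; rewrite lee_fin.
apply: ge0_le_lebint => x; first by rewrite lee_fin.
rewrite !indicE -EFinD lee_fin; case: (boolP (x \in A)) => [/set_mem/ABC[] Bx|_].
- by rewrite mem_set // ler_wpDr.
- by rewrite (mem_set Bx) ler_wpDl.
- by rewrite addr_ge0.
Qed.

Lemma lebint_indic_gt0 n (f : n.-tuple R -> \bar R) (A : set (n.-tuple R)) :
  (forall x, 0 <= f x) -> measurable_fun setT f -> ae_leb (fun x => 0 < f x) ->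
  measurable A -> 0 < lebn A -> 0 < lebint (fun x => f x * (\1_A x)%:E).
Proof.
move=> f0 mf [B [mB f_gt0 B0]] mA A_gt0.
set g := fun x => f x * (\1_A x)%:E.
have g0 x : 0 <= g x by apply: mule_ge0; rewrite ?lee_fin.
have mg : measurable_fun setT g.
  by apply: emeasurable_funM => //; exact/measurable_EFinP/measurable_indic.
rewrite lt_neqAle lebint_ge0 // andbT eq_sym; apply/negP => /eqP g_eq0.
have A_sub : A `<=` [set x | 0 < g x] `|` B.
  move=> x Ax; have [Bx|nBx] := pselect (B x); [by right|left].
  have fx : 0 < f x by apply: contrapT => /f_gt0.
  by rewrite /= /g indicE mem_set // mule1.
have := le_lebn_setU mA (measurable_fun_gt0 mg) mB A_sub.
by rewrite ge0_lebint_eq0 // B0 adde0 leNgt A_gt0.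
Qed.

Definition cube n (a : R) : set (n.-tuple R) :=
  [set y | forall i, (0 <= tnth y i <= a)%R].
Arguments cube : clear implicits.

Lemma measurable_cube n a : measurable (cube n a).
Proof.
have -> : cube n a = \bigcap_(i in [set: 'I_n])
    ((fun y : n.-tuple R => tnth y i) @^-1` `[0%R, a]%classic).
  apply/seteqP; split => y /= y_cube.
  - by move=> i _ /=; rewrite in_itv /=; exact: y_cube.
  - by move=> i; have := y_cube i I; rewrite /= in_itv.
apply: fin_bigcap_measurable; first exact: finite_finset.
by move=> i _; rewrite -[X in measurable X]setTI; exact: measurable_tnth.
Qed.

Lemma in_cube_cons n a t (y : n.-tuple R) :
  (cons_tuple t y \in cube n.+1 a) = (t \in `[0%R, a]%classic) && (y \in cube n a).
Proof.
apply/idP/andP => [/set_mem ty_cube|[/set_mem t_itv /set_mem y_cube]].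
  split; apply/mem_set.
  - by have := ty_cube ord0; rewrite /= in_itv.
  - by move=> j; have := ty_cube (lift ord0 j); rewrite tnthS.
apply/mem_set => i; case: (unliftP ord0 i) => [j ->|->].
  by rewrite tnthS; exact: y_cube.
by move: t_itv; rewrite /= in_itv.
Qed.

Lemma lebn_cube n a : (0 < a)%R -> lebn (cube n a) = (a ^+ n)%:E.
Proof.
move=> a0; rewrite /lebn; elim: n => [|n IH] /=.
  by rewrite indicE expr0 (mem_set (_ : cube 0 a [tuple])) // => -[].
transitivity (\int[@lebesgue_measure R]_t
    ((\1_`[0%R, a]%classic t : R)%:E * (a ^+ n)%:E)).
  apply: eq_integral => t _; rewrite -IH -ge0_lebintZl; last 3 first.
  - by rewrite indicE.
  - by move=> y; rewrite lee_fin.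
  - by apply/measurable_EFinP/measurable_indic; exact: measurable_cube.
  apply: congr1; apply: funext => y.
  by rewrite !indicE in_cube_cons -EFinM; case: (t \in _); case: (y \in _);
    rewrite /= ?mulr1 ?mulr0 ?mul0r.
rewrite ge0_integralZr; last 4 first.
- exact: measurableT.
- exact/measurable_EFinP/measurable_indic.
- by move=> t _; rewrite lee_fin.
- by rewrite lee_fin exprn_ge0 // ltW.
rewrite integral_indic // setIT.
change (lebesgue_measure `[0%R, a]%classic * (a ^+ n)%:E = (a ^+ n.+1)%:E).
by rewrite lebesgue_measure_itv /= lte_fin a0 -EFinD subr0 -EFinM exprS.
Qed.

End lebint.
Arguments cube {R} n a.

Lemma ae_lebW (R : realType) n (P Q : n.-tuple R -> Prop) :
  (forall x, P x -> Q x) -> ae_leb P -> ae_leb Q.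
Proof.
move=> PQ [B [mB notP_B B0]]; exists B; split => // x notQx.
by apply: notP_B => /PQ.
Qed.

Section euclid.
Variable R : realType.

Lemma sum_sqr_cube_le n (y : n.-tuple R) :
  cube n (2 * n%:R)^-1 y -> \sum_(i < n) tnth y i ^+ 2 <= 4^-1.
Proof.
case: n => [|n] in y *; first by rewrite big_ord0 invr_ge0.
move=> y_cube; set a : R := (2 * (n.+1)%:R)^-1.
have n_ge1 : 1 <= (n.+1)%:R :> R by rewrite ler1n.
have a0 : 0 <= a by rewrite invr_ge0 mulr_ge0 // ler0n.
have a_n : a * (n.+1)%:R = 2^-1.
  by rewrite /a invfM -mulrA mulVf ?mulr1 // gt_eqF // (lt_le_trans ltr01 n_ge1).
apply: (@le_trans _ _ (\sum_(i < n.+1) a ^+ 2)).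
  apply: ler_sum => i _; have /andP[y0 ya] := y_cube i.
  by rewrite ler_pXn2r ?nnegrE.
rewrite sumr_const card_ord -mulr_natr; nra.
Qed.

(* For |y| <= 1/2 < 1 < |x|: |x - y|^2 <= 2|x|^2 + 2|y|^2 <= 4|x|^2 and
   |x|^2 <= 2|x - y|^2 + 2|y|^2. *)
Lemma euclid_dist_cube n (x y : n.-tuple R) :
  cube n (2 * n%:R)^-1 y -> 1 < euclid_norm x ->
  0 < euclid_dist x y <= 2 * euclid_norm x.
Proof.
move=> y_cube x_gt1; have Y_le := sum_sqr_cube_le y_cube.
move: x_gt1; rewrite /euclid_norm /euclid_dist.
set S := \sum_(i < n) _; set T := \sum_(i < n) _; set Y := \sum_(i < n) _ in Y_le.
have T_le : T <= 2 * S + 2 * Y.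
  rewrite !mulr_sumr -big_split /=; apply: ler_sum => i _.
  have := sqr_ge0 (tnth x i + tnth y i); nra.
have S_le : S <= 2 * T + 2 * Y.
  rewrite !mulr_sumr -big_split /=; apply: ler_sum => i _.
  have := sqr_ge0 (tnth x i - 2 * tnth y i); nra.
have S0 : 0 <= S by apply: sumr_ge0 => i _; exact: sqr_ge0.
have T0 : 0 <= T by apply: sumr_ge0 => i _; exact: sqr_ge0.
have Y0 : 0 <= Y by apply: sumr_ge0 => i _; exact: sqr_ge0.
move=> sqrtS_gt1; have S_gt1 : 1 < S by rewrite -(sqr_sqrtr S0); nra.
rewrite sqrtr_gt0 -(ler_pXn2r (_ : 0 < 2)%N) ?nnegrE ?mulr_ge0 ?sqrtr_ge0 //.
by rewrite exprMn !sqr_sqrtr //; apply/andP; split; lra.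
Qed.

Lemma cube_kernel_ge n k (x y : n.-tuple R) : 1 <= k ->
  cube n (2 * n%:R)^-1 y -> 1 < euclid_norm x ->
  (2 * euclid_norm x) `^ (1 - k) <= (euclid_dist x y `^ (k - 1))^-1.
Proof.
move=> k1 y_cube x_gt1; have /andP[d_gt0 d_le] := euclid_dist_cube y_cube x_gt1.
have x_gt0 : 0 < euclid_norm x by exact: lt_trans x_gt1.
rewrite -opprB powRN lef_pV2 ?posrE ?powR_gt0 ?mulr_gt0 //.
by apply: ge0_ler_powR; rewrite ?nnegrE ?subr_ge0 ?mulr_ge0 // ltW.
Qed.

End euclid.

Section lower_bound.
Variable R : realType.
Local Open Scope ereal_scope.

Lemma exists_fin_gt0_le (e : \bar R) : 0 < e -> exists2 r : R, (0 < r)%R & r%:E <= e.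
Proof. by case: e => [r||] // e_gt0; [exists r | exists 1%R; rewrite ?leey]. Qed.

Lemma lebint_kernel_cube_ge n k p (v : n.-tuple R -> \bar R) (x : n.-tuple R) :
  (1 <= k)%R -> measurable_fun setT v -> (1 < euclid_norm x)%R ->
  ((2 * euclid_norm x) `^ (1 - k))%:E *
    lebint (fun y => v y `^ p * (\1_(cube n (2 * n%:R)^-1) y)%:E) <=
  lebint (fun y => v y `^ p * ((euclid_dist x y `^ (k - 1))^-1)%:E).
Proof.
move=> k1 mv x_gt1; rewrite -ge0_lebintZl ?powR_ge0 //; first last.
- apply: emeasurable_funM; first exact: (measurableT_comp (measurable_poweR p) mv).
  by apply/measurable_EFinP/measurable_indic; exact: measurable_cube.
- by move=> y; apply: mule_ge0; rewrite ?poweR_ge0 ?lee_fin.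
apply: ge0_le_lebint => y.
  by rewrite !mule_ge0 ?poweR_ge0 ?lee_fin ?powR_ge0.
rewrite indicE; case: (boolP (y \in _)) => [/set_mem y_cube|_]; last first.
  by rewrite mule0 mule0 mule_ge0 ?poweR_ge0 // lee_fin invr_ge0 powR_ge0.
rewrite mule1 muleC lee_wpmul2l ?poweR_ge0 // lee_fin.
exact: cube_kernel_ge.
Qed.

End lower_bound.

Theorem lemma3p1 (R : realType) (N : nat) (k p c : R)
  (v : (N.-1).-tuple R -> \bar R) :
  (3 <= N)%N -> 1 < k -> k < N%:R - 1 -> 0 < p -> 0 < c ->
  measurable_fun [set: (N.-1).-tuple R] v ->
  (forall x, (0 <= v x)%E) ->
  ae_leb (fun x => (0 < v x < +oo)%E) ->
  ae_leb (fun x => (c%:E * lebint (fun y =>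
                      (v y `^ p)%E * (((euclid_dist x y) `^ (k - 1))^-1)%:E) <= v x)%E) ->
  exists C : R, 0 < C /\
    ae_leb (fun x => 1 < euclid_norm x -> ((C * (euclid_norm x) `^ (1 - k))%:E <= v x)%E).
Proof.
move=> N_ge3 k_gt1 _ _ c_gt0 mv _ v_pos v_ineq.
have a_gt0 : 0 < (2 * (N.-1)%:R)^-1 :> R.
  by rewrite invr_gt0 mulr_gt0 // ltr0n -subn1 subn_gt0 (leq_trans _ N_ge3).
have [r r_gt0 r_le] : exists2 r : R, 0 < r &
    (r%:E <= lebint (fun y => v y `^ p * (\1_(cube _ (2 * (N.-1)%:R)^-1) y)%:E))%E.
  apply: exists_fin_gt0_le; apply: lebint_indic_gt0.
  - by move=> y; rewrite poweR_ge0.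
  - exact: (measurableT_comp (measurable_poweR p) mv).
  - by apply: ae_lebW v_pos => y /andP[vy_gt0 _]; rewrite poweR_gt0.
  - exact: measurable_cube.
  - by rewrite lebn_cube // lte_fin exprn_gt0.
exists (c * 2 `^ (1 - k) * r); split; first by rewrite !mulr_gt0 // powR_gt0.
apply: ae_lebW v_ineq => x v_ge x_gt1; apply: (le_trans _ v_ge).
have -> : c * 2 `^ (1 - k) * r * euclid_norm x `^ (1 - k) =
    c * ((2 * euclid_norm x) `^ (1 - k) * r).
  by rewrite powRM ?sqrtr_ge0 //; ring.
rewrite EFinM; apply: lee_wpmul2l; first by rewrite lee_fin ltW.
apply: (le_trans _ (lebint_kernel_cube_ge p (ltW k_gt1) mv x_gt1)).
by rewrite EFinM; apply: lee_wpmul2l; rewrite ?lee_fin ?powR_ge0.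
Qed.
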